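(* The $R$-algebra $\mathcal H_{n,r}$ is isomorphic to the $R$-algebra with generators $t_1,\ldots,t_n,g_1,\ldots,g_{n-1}$ and defining relations (1) $(t_i-u_1)\cdots(t_i-u_r)=0$ for $1\le i\le n$; (2) $t_it_j=t_jt_i$ for $1\le i,j\le n$; (3) $g_jt_i=t_{s_j(i)}g_j$ for $1\le j\le n-1$, $1\le i\le n$; (4) $g_ig_j=g_jg_i$ for $|i-j|>1$; (5) $g_ig_{i+1}g_i=g_{i+1}g_ig_{i+1}$ for $1\le i\le n-2$; (6) $g_i^2=1+(q-q^{-1})e_ig_i$ for $1\le i\le n-1$, where in the presented algebra $e_i:=\sum_{\mathbf k\in[1,r]^n,\ k_i=k_{i+1}}b_{\mathbf k}$ with $b_{\mathbf k}:=\prod_{i=1}^n\prod_{1\le j\le r,\,j\ne k_i}\frac{t_i-u_j}{u_{k_i}-u_j}$; the isomorphism sends $t_i\mapsto t_i$ and $g_i\mapsto T_i+B'_{i,i+1}$.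
   Context: Standing setup: $R$ is an integral domain, $n\ge 1$, $r\ge 1$, and $q,u_1,\ldots,u_r\in R$ with $q$ invertible in $R$ and $\Delta:=\prod_{1\le j<i\le r}(u_i-u_j)$ invertible in $R$. For $1\le c\le r$ let $F_c(X)\in R[X]$ be the unique polynomial of degree $\le r-1$ with $F_c(u_{c'})=\delta_{c,c'}\Delta$ for all $1\le c'\le r$. The modified Ariki–Koike (Shoji) algebra $\mathcal H_{n,r}=\mathcal H_{n,r}(R,q,u_1,\ldots,u_r)$ is the associative $R$-algebra generated by $t_1,\ldots,t_n,T_1,\ldots,T_{n-1}$ subject to: $(T_i-q)(T_i+q^{-1})=0$; $(t_i-u_1)\cdots(t_i-u_r)=0$; $T_iT_{i+1}T_i=T_{i+1}T_iT_{i+1}$; $T_iT_j=T_jT_i$ for $|i-j|\ge2$; $t_it_j=t_jt_i$; $T_jt_k=t_kT_j$ for $k\ne j,j+1$; and for $2\le j\le n$: $T_{j-1}t_j=t_{j-1}T_{j-1}+\Delta^{-2}\sum_{1\le c_1<c_2\le r}(u_{c_2}-u_{c_1})(q-q^{-1})F_{c_1}(t_{j-1})F_{c_2}(t_j)$ and $T_{j-1}t_{j-1}=t_jT_{j-1}-\Delta^{-2}\sum_{1\le c_1<c_2\le r}(u_{c_2}-u_{c_1})(q-q^{-1})F_{c_1}(t_{j-1})F_{c_2}(t_j)$. Write $[1,r]=\{1,\ldots,r\}$ and, in $\mathcal H_{n,r}$, $b_{\mathbf k}:=\prod_{i=1}^n\prod_{1\le j\le r,\,j\ne k_i}\frac{t_i-u_j}{u_{k_i}-u_j}$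 for $\mathbf k\in[1,r]^n$ and $B'_{i,j}:=-(q-q^{-1})\sum_{\mathbf k,\ k_i<k_j}b_{\mathbf k}$. $s_j=(j\ j+1)\in\mathfrak S(n)$. *)

From HB Require Import structures.
From mathcomp Require Import all_boot all_order all_algebra.
From mathcomp Require Import fingroup perm.
Set Implicit Arguments. Unset Strict Implicit. Unset Printing Implicit Defensive.
Import Order.TTheory GRing.Theory.
Local Open Scope ring_scope.

(* Conventions (0-based): the paper's n >= 1 is written n.+1 below.
   t_1..t_{n+1} are indexed by 'I_n.+1, T_1..T_n (resp. g_1..g_n) by 'I_n;
   the 0-based index j : 'I_n of T stands for T_{j+1}, which involves
   t_{j+1} = t (jlo j) and t_{j+2} = t (jhi j). u_1..u_r are u : 'I_r -> R. *)

Section Defs.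
Variables (R : idomainType) (r : nat) (u : 'I_r -> R) (q : R).

Definition jlo n (j : 'I_n) : 'I_n.+1 := widen_ord (leqnSn n) j.
Definition jhi n (j : 'I_n) : 'I_n.+1 := lift ord0 j.

Definition Delta : R := \prod_(i < r) \prod_(j < r | (j < i)%N) (u i - u j).

Variable A : algType R.

(* F_c(x): the unique polynomial of degree <= r-1 with F_c(u_c') = delta_{c,c'} Delta
   (Lagrange form), evaluated at x : A. *)
Definition Fev (c : 'I_r) (x : A) : A :=
  Delta *: \prod_(j < r | j != c) ((u c - u j)^-1 *: (x - (u j)%:A)).

Definition bk n (t : 'I_n -> A) (k : {ffun 'I_n -> 'I_r}) : A :=
  \prod_(i < n) \prod_(j < r | j != k i) ((u (k i) - u j)^-1 *: (t i - (u j)%:A)).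

Definition Bp n (t : 'I_n -> A) (i j : 'I_n) : A :=
  - (q - q^-1) *: \sum_(k : {ffun 'I_n -> 'I_r} | (k i < k j)%N) bk t k.

(* e_i, i.e. e_{j+1} for 0-based j *)
Definition ee n (t : 'I_n.+1 -> A) (j : 'I_n) : A :=
  \sum_(k : {ffun 'I_n.+1 -> 'I_r} | k (jlo j) == k (jhi j)) bk t k.

(* the image of g_{j+1}: T_{j+1} + B'_{j+1,j+2} *)
Definition gimg n (t : 'I_n.+1 -> A) (T : 'I_n -> A) (j : 'I_n) : A :=
  T j + Bp t (jlo j) (jhi j).

Definition corr (x y : A) : A :=
  \sum_(c1 < r) \sum_(c2 < r | (c1 < c2)%N)
     ((Delta ^- 2) * (u c2 - u c1) * (q - q^-1)) *: (Fev c1 x * Fev c2 y).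

(* defining relations of the modified Ariki-Koike algebra H_{n+1,r} *)
Definition HRel n (t : 'I_n.+1 -> A) (T : 'I_n -> A) : Prop :=
  (forall i, (T i - q%:A) * (T i + q^-1%:A) = 0) /\
      (forall i, \prod_(c < r) (t i - (u c)%:A) = 0) /\
      (forall i j : 'I_n, j = i.+1 :> nat -> T i * T j * T i = T j * T i * T j) /\
      (forall i j : 'I_n, (i.+1 < j)%N || (j.+1 < i)%N -> T i * T j = T j * T i) /\
      (forall i j, t i * t j = t j * t i) /\
      (forall (j : 'I_n) (k : 'I_n.+1), k != jlo j -> k != jhi j ->
          T j * t k = t k * T j) /\
      (forall j : 'I_n,
          T j * t (jhi j) = t (jlo j) * T j + corr (t (jlo j)) (t (jhi j))
       /\ T j * t (jlo j) = t (jhi j) * T j - corr (t (jlo j)) (t (jhi j))).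

Definition GRel n (t : 'I_n.+1 -> A) (g : 'I_n -> A) : Prop :=
  (forall i, \prod_(c < r) (t i - (u c)%:A) = 0) /\
      (forall i j, t i * t j = t j * t i) /\
      (forall (j : 'I_n) (i : 'I_n.+1), g j * t i = t (tperm (jlo j) (jhi j) i) * g j) /\
      (forall i j : 'I_n, (i.+1 < j)%N || (j.+1 < i)%N -> g i * g j = g j * g i) /\
      (forall i j : 'I_n, j = i.+1 :> nat -> g i * g j * g i = g j * g i * g j) /\
      (forall i, g i * g i = 1 + (q - q^-1) *: (ee t i * g i)).

End Defs.

Definition presented (R : comRingType) (n : nat) (A : algType R)
    (Rel : forall B : algType R, ('I_n.+1 -> B) -> ('I_n -> B) -> Prop)
    (t : 'I_n.+1 -> A) (T : 'I_n -> A) : Prop :=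
  Rel A t T /\
  forall (B : algType R) (tB : 'I_n.+1 -> B) (TB : 'I_n -> B), Rel B tB TB ->
    exists f : {lrmorphism A -> B},
      [/\ (forall i, f (t i) = tB i), (forall j, f (T j) = TB j) &
          forall f' : {lrmorphism A -> B},
            (forall i, f' (t i) = tB i) -> (forall j, f' (T j) = TB j) ->
            forall x, f' x = f x].

From HB Require Import structures.
From mathcomp Require Import all_boot all_order all_algebra all_fingroup.
From mathcomp Require Import ring zify ssrAC.
From Stdlib Require Import FunctionalExtensionality.
Set Implicit Arguments. Unset Strict Implicit. Unset Printing Implicit Defensive.
Import GRing.Theory.
Local Open Scope ring_scope.

(* Since Delta is a unit, the u_c are pairwise distinct, so the Lagrange elements
   E_c(t_i) are orthogonal idempotents summing to 1 with t_i E_c(t_i) = u_c E_c(t_i).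
   Their products b_k therefore span a copy of the algebra of functions
   [1,r]^n -> R, f |-> diag f = sum_k f(k) b_k, in which B'_(j,j+1), e_j and the
   correction term of the Ariki-Koike relations are explicit functions of k.
   An element g with g t_i = t_(s_j i) g conjugates diag f into diag (f o s_j).
   Writing T_j = g_j - B'_(j,j+1), every defining relation of one presentation
   turns into the corresponding one of the other up to an identity between
   {0,1}-valued functions of k_j, k_(j+1), k_(j+2).  As T |-> T + B' is invertible
   and commutes with algebra morphisms, the universal property transfers. *)

Section Lagrange.
Variables (R : idomainType) (r : nat) (u : 'I_r -> R).
Hypothesis Delta_unit : Delta u \is a GRing.unit.

Lemma unit_subr_nodes (c j : 'I_r) : c != j -> u c - u j \is a GRing.unit.
Proof.
have unit_lt (a b : 'I_r) : (b < a)%N -> u a - u b \is a GRing.unit.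
  move=> ba; move: Delta_unit; rewrite /Delta (bigD1 a) //= unitrM => /andP[+ _].
  by rewrite (bigD1 b) //= unitrM => /andP[].
move=> ncj; case: (ltngtP c j) => [cj|jc|/val_inj cj]; last by rewrite cj eqxx in ncj.
  by rewrite -opprB unitrN unit_lt.
exact: unit_lt.
Qed.

Definition lagrange_poly (c : 'I_r) : {poly R} :=
  \prod_(j < r | j != c) ((u c - u j)^-1 *: ('X - (u j)%:P)).

Definition nodal_poly : {poly R} := \prod_(c < r) ('X - (u c)%:P).

Lemma horner_lagrange c y :
  (lagrange_poly c).[y] = \prod_(j < r | j != c) ((u c - u j)^-1 * (y - u j)).
Proof. by rewrite horner_prod; apply: eq_bigr => j _; rewrite hornerZ hornerXsubC. Qed.

Lemma lagrange_node c d : (lagrange_poly c).[u d] = (c == d)%:R.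
Proof.
rewrite horner_lagrange; have [->|ncd] := eqVneq c d.
  by rewrite big1 // => j nj; rewrite mulVr // unit_subr_nodes // eq_sym.
by rewrite (bigD1 d) 1?eq_sym //= subrr mulr0 mul0r.
Qed.

Lemma nodal_poly_dvd (p : {poly R}) :
  (forall d, p.[u d] = 0) -> exists Q, p = Q * nodal_poly.
Proof.
move=> p_u; set s := [seq u d | d <- index_enum 'I_r].
have p_s : all (root p) s by apply/allP => y /mapP[d _ ->]; apply/rootP.
have uniq_s : uniq_roots s.
  rewrite /s; elim: (index_enum 'I_r) (index_enum_uniq 'I_r) => //= a l IH.
  case/andP=> al ul; rewrite IH // andbT; apply/allP => y /mapP[b bl ->].
  rewrite /diff_roots mulrC eqxx unit_subr_nodes //.
  by apply: contraNneq al => <-.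
by have [Q ->] := uniq_roots_prod_XsubC p_s uniq_s; exists Q; rewrite big_map.
Qed.

Variable B : algType R.

Definition lagrange_elt (c : 'I_r) (y : B) : B :=
  \prod_(j < r | j != c) ((u c - u j)^-1 *: (y - (u j)%:A)).

Lemma horner_alg_lagrange c y : lagrange_elt c y = horner_alg y (lagrange_poly c).
Proof.
rewrite rmorph_prod; apply: eq_bigr => j _.
by rewrite [RHS]linearZ /= rmorphB /= horner_algX horner_algC mulr_algl.
Qed.

Lemma comm_lagrange_elt c (x y : B) : GRing.comm y x -> GRing.comm y (lagrange_elt c x).
Proof.
move=> yx; apply: commr_prod => j _.
by rewrite /GRing.comm -scalerAr -scalerAl mulrBr mulrBl yx mulr_algl mulr_algr.
Qed.

Variable x : B.
Hypothesis x_nodal : \prod_(c < r) (x - (u c)%:A) = 0.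

Lemma horner_alg_vanish (p : {poly R}) :
  (forall d, p.[u d] = 0) -> horner_alg x p = 0.
Proof.
case/nodal_poly_dvd=> Q ->; rewrite rmorphM /=.
rewrite rmorph_prod (eq_bigr (fun c => x - (u c)%:A)) ?x_nodal ?mulr0 // => c _.
by rewrite rmorphB /= horner_algX horner_algC.
Qed.

Lemma sum_lagrange_elt : \sum_c lagrange_elt c x = 1.
Proof.
apply/eqP; rewrite -subr_eq0; apply/eqP.
have -> : \sum_c lagrange_elt c x - 1 = horner_alg x (\sum_c lagrange_poly c - 1).
  rewrite rmorphB rmorph_sum rmorph1; congr (_ - _).
  by apply: eq_bigr => c _; rewrite horner_alg_lagrange.
apply: horner_alg_vanish => d; rewrite hornerD hornerN hornerC horner_sum.
rewrite (bigD1 d) //= lagrange_node eqxx big1 ?addr0 ?subrr // => c ncd.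
by rewrite lagrange_node (negbTE ncd).
Qed.

Lemma mul_lagrange_elt c : x * lagrange_elt c x = u c *: lagrange_elt c x.
Proof.
apply/eqP; rewrite -subr_eq0 -mulr_algl -mulrBl; apply/eqP.
have -> : (x - (u c)%:A) * lagrange_elt c x =
          horner_alg x (('X - (u c)%:P) * lagrange_poly c).
  by rewrite rmorphM rmorphB /= horner_algX horner_algC horner_alg_lagrange.
apply: horner_alg_vanish => d; rewrite hornerM hornerXsubC lagrange_node.
by have [->|] := eqVneq c d; rewrite ?subrr ?mul0r ?mulr0.
Qed.

End Lagrange.

Section EigenProducts.
Variables (R : comPzRingType) (B : algType R).

Lemma mul_prod_eigen (I : eqType) (s : seq I) (P : pred I) (F : I -> B) (a : B) i0 c :
  i0 \in s -> P i0 -> (forall l, GRing.comm a (F l)) -> a * F i0 = c *: F i0 ->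
  a * \prod_(l <- s | P l) F l = c *: \prod_(l <- s | P l) F l.
Proof.
move=> + Pi0 aF a_i0; elim: s => //= l s IH; rewrite in_cons big_cons.
case/orP=> [/eqP<-|i0s]; first by rewrite Pi0 mulrA a_i0 scalerAl.
by case: (P l); rewrite ?mulrA ?aF -?mulrA IH // scalerAr.
Qed.

Lemma prod_mul_eigen (I : Type) (s : seq I) (P : pred I) (F : I -> B) (a : I -> R) (y : B) :
  (forall l, F l * y = a l *: y) ->
  (\prod_(l <- s | P l) F l) * y = (\prod_(l <- s | P l) a l) *: y.
Proof.
move=> Fy; elim/big_rec2: _ => [|l z w _ IH]; first by rewrite mul1r scale1r.
by rewrite -mulrA IH -scalerAr Fy scalerA mulrC.
Qed.

End EigenProducts.

Lemma commutator_addrr (A : pzRingType) (a b c e : A) :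
  GRing.comm a e -> GRing.comm b c -> GRing.comm c e ->
  (a + c) * (b + e) - (b + e) * (a + c) = a * b - b * a.
Proof.
move=> ae bc ce; rewrite !mulrDl !mulrDr ae bc ce !opprD !addrA.
by rewrite (ACl ((1*5)*(2*7)*(3*6)*(4*8))) /= !subrr !addr0.
Qed.

Section Indicators.
Variable R : comPzRingType.
Implicit Types (a b c : nat) (e : R).

Lemma lt_max_indicator a b c e :
  e * (a < c)%N%:R * (e * (a == b)%:R + e * (b < a)%N%:R) + e * (a < b)%N%:R * (e * (b < c)%N%:R)
  = e * (b < c)%N%:R * (e * (a < c)%N%:R).
Proof.
by case: (ltngtP a b) => ab; case: (ltngtP b c) => bc; case: (ltngtP a c) => ac /=;
  try (exfalso; lia); ring.
Qed.

Lemma lt_min_indicator a b c e :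
  e * (a < c)%N%:R * (e * (b == c)%:R + e * (c < b)%N%:R) + e * (b < c)%N%:R * (e * (a < b)%N%:R)
  = e * (a < b)%N%:R * (e * (a < c)%N%:R).
Proof.
by case: (ltngtP a b) => ab; case: (ltngtP b c) => bc; case: (ltngtP a c) => ac /=;
  try (exfalso; lia); ring.
Qed.

Lemma lt_chain_indicator a b c e :
  e * (a < b)%N%:R * (e * (b < c)%N%:R) * (e * (a < b)%N%:R) =
  e * (b < c)%N%:R * (e * (a < b)%N%:R) * (e * (b < c)%N%:R).
Proof. by case: (a < b)%N; case: (b < c)%N => /=; ring. Qed.

End Indicators.

Section Idempotents.
Variables (R : idomainType) (r : nat) (u : 'I_r -> R).
Hypothesis Delta_unit : Delta u \is a GRing.unit.
Variables (B : algType R) (m : nat) (t : 'I_m -> B).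
Hypothesis t_nodal : forall i, \prod_(c < r) (t i - (u c)%:A) = 0.
Hypothesis t_comm : forall i j, t i * t j = t j * t i.

Local Notation kT := {ffun 'I_m -> 'I_r}.
Local Notation b := (bk u t).

Lemma mul_t_bk i k : t i * b k = u (k i) *: b k.
Proof.
apply: (mul_prod_eigen (mem_index_enum i)) => //; last exact: mul_lagrange_elt.
by move=> l; apply: comm_lagrange_elt.
Qed.

Lemma mul_bk_t i k : b k * t i = u (k i) *: b k.
Proof.
rewrite -mul_t_bk; apply/esym/commr_prod => l _.
exact: comm_lagrange_elt.
Qed.

Lemma mul_lagrange_elt_bk c i k : lagrange_elt u c (t i) * b k = (k i == c)%:R *: b k.
Proof.
rewrite (prod_mul_eigen _ _ (a := fun j => (u c - u j)^-1 * (u (k i) - u j))).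
  by rewrite -horner_lagrange lagrange_node // eq_sym.
by move=> j; rewrite -scalerAl mulrBl mul_t_bk mulr_algl -scalerBl scalerA.
Qed.

Lemma mul_bk k l : b k * b l = (k == l)%:R *: b l.
Proof.
rewrite (prod_mul_eigen _ _ (a := fun i => (l i == k i)%:R)); last first.
  by move=> i; rewrite mul_lagrange_elt_bk.
congr (_ *: _); have [->|nkl] := eqVneq k l.
  by rewrite big1 // => i _; rewrite eqxx.
have [i ni] : exists i, l i != k i.
  apply/existsP; rewrite -negb_forall; apply: contra nkl => /forallP lk.
  by apply/eqP/ffunP => i; apply/esym/eqP/lk.
by rewrite (bigD1 i) //= (negbTE ni) mul0r.
Qed.

Lemma sum_bk : \sum_k b k = 1.
Proof.
rewrite -(bigA_distr_bigA (fun i c => lagrange_elt u c (t i))).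
by rewrite big1 // => i _; apply: sum_lagrange_elt.
Qed.

Definition diag (f : kT -> R) : B := \sum_k f k *: b k.

Lemma eq_diag f h : f =1 h -> diag f = diag h.
Proof. by move=> fh; apply: eq_bigr => k _; rewrite fh. Qed.

Lemma diagD f h : diag f + diag h = diag (fun k => f k + h k).
Proof. by rewrite -big_split; apply: eq_bigr => k _; rewrite scalerDl. Qed.

Lemma diagN f : - diag f = diag (fun k => - f k).
Proof. by rewrite -sumrN; apply: eq_bigr => k _; rewrite scaleNr. Qed.

Lemma diagB f h : diag f - diag h = diag (fun k => f k - h k).
Proof. by rewrite diagN diagD. Qed.

Lemma diagZ a f : a *: diag f = diag (fun k => a * f k).
Proof. by rewrite scaler_sumr; apply: eq_bigr => k _; rewrite scalerA. Qed.

Lemma diag_sum (I : Type) (s : seq I) (P : pred I) (F : I -> kT -> R) :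
  \sum_(i <- s | P i) diag (F i) = diag (fun k => \sum_(i <- s | P i) F i k).
Proof.
rewrite exchange_big; apply: eq_bigr => k _.
by rewrite scaler_suml.
Qed.

Lemma diag_indicator (P : pred kT) : diag (fun k => (P k)%:R) = \sum_(k | P k) b k.
Proof. by rewrite [RHS]big_mkcond; apply: eq_bigr => k _; case: (P k); rewrite ?scale1r ?scale0r. Qed.

Lemma diag0 : diag (fun _ => 0) = 0.
Proof. by apply: big1 => k _; rewrite scale0r. Qed.

Lemma diagC a : diag (fun _ => a) = a%:A.
Proof. by rewrite /diag -scaler_sumr sum_bk. Qed.

Lemma mul_bk_diag k f : b k * diag f = f k *: b k.
Proof.
rewrite mulr_sumr (bigD1 k) //= big1 ?addr0 => [|l lk].
  by rewrite -scalerAr mul_bk eqxx scale1r.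
by rewrite -scalerAr mul_bk eq_sym (negbTE lk) scale0r scaler0.
Qed.

Lemma diagM f h : diag f * diag h = diag (fun k => f k * h k).
Proof.
rewrite mulr_suml; apply: eq_bigr => k _.
by rewrite -scalerAl mul_bk_diag scalerA.
Qed.

Lemma mul_t_diag i f : t i * diag f = diag (fun k => u (k i) * f k).
Proof.
rewrite mulr_sumr; apply: eq_bigr => k _.
by rewrite -scalerAr mul_t_bk scalerA mulrC.
Qed.

Lemma mul_diag_t i f : diag f * t i = diag (fun k => u (k i) * f k).
Proof.
rewrite mulr_suml; apply: eq_bigr => k _.
by rewrite -scalerAl mul_bk_t scalerA mulrC.
Qed.

Lemma lagrange_elt_diag c i : lagrange_elt u c (t i) = diag (fun k => (k i == c)%:R).
Proof.
rewrite -[LHS]mulr1 -sum_bk mulr_sumr.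
by apply: eq_bigr => k _; apply: mul_lagrange_elt_bk.
Qed.

Lemma Bp_diag q i j : Bp u q t i j = - diag (fun k => (q - q^-1) * (k i < k j)%N%:R).
Proof. by rewrite /Bp scaleNr -diagZ diag_indicator. Qed.

Lemma corr_diag q i1 i2 : corr u q (t i1) (t i2) =
  diag (fun k => (q - q^-1) * (k i1 < k i2)%N%:R * (u (k i2) - u (k i1))).
Proof.
have corr_term (c1 c2 : 'I_r) :
    (Delta u ^- 2 * (u c2 - u c1) * (q - q^-1)) *: (Fev u c1 (t i1) * Fev u c2 (t i2)) =
    diag (fun k => (u c2 - u c1) * (q - q^-1) * ((k i1 == c1)%:R * (k i2 == c2)%:R)).
  rewrite /Fev -scalerAl -scalerAr !scalerA -!/(lagrange_elt _ _ _) !lagrange_elt_diag diagM diagZ.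
  apply: eq_diag => k; congr (_ * _).
  have DD : Delta u ^- 2 * (Delta u * Delta u) = 1 by rewrite -expr2 mulVr // unitrX.
  by rewrite -[RHS]mul1r -DD; ring.
rewrite /corr; under eq_bigr => c1 _ do under eq_bigr => c2 _ do rewrite corr_term.
under eq_bigr => c1 _ do rewrite diag_sum.
rewrite diag_sum; apply: eq_diag => k.
rewrite (bigD1 (k i1)) //= [X in _ + X]big1 ?addr0 => [|c1 c1k]; last first.
  by apply: big1 => c2 _; rewrite eq_sym (negbTE c1k) mul0r mulr0.
have [lt_k|ge_k] := boolP (k i1 < k i2)%N.
  rewrite (bigD1 (k i2)) //= big1 ?addr0 => [|c2 /andP[_ c2k]].
    by rewrite !eqxx !mulr1 mulrC.
  by rewrite eq_sym (negbTE c2k) !mulr0.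
rewrite big1 ?mulr0 ?mul0r // => c2 lt_c2.
have -> : (k i2 == c2) = false by apply/negbTE; apply: contra ge_k => /eqP->.
by rewrite !mulr0.
Qed.

Definition permk (s : {perm 'I_m}) (k : kT) : kT := [ffun l => k (s l)].

Section Conjugation.
Variables (g : B) (s : {perm 'I_m}).
Hypothesis s_invol : forall i, s (s i) = i.
Hypothesis g_t : forall i, g * t i = t (s i) * g.

Lemma permkK : involutive (permk s).
Proof. by move=> k; apply/ffunP => i; rewrite !ffunE s_invol. Qed.

Lemma mul_bk_g_bk l k : l != permk s k -> b l * g * b k = 0.
Proof.
move=> lk; have [i ni] : exists i, l i != k (s i).
  apply/existsP; rewrite -negb_forall; apply: contra lk => /forallP lk.
  by apply/eqP/ffunP => i; rewrite ffunE; apply/eqP/lk.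
set X := b l * g * b k.
(* X is an eigenvector of t i for the two distinct eigenvalues u (l i) and u (k (s i)). *)
have eigen_l : t i * X = u (l i) *: X by rewrite /X !mulrA mul_t_bk -!scalerAl.
have eigen_k : t i * X = u (k (s i)) *: X.
  have t_g : t i * g = g * t (s i) by rewrite g_t s_invol.
  have t_bl : t i * b l = b l * t i by rewrite mul_t_bk mul_bk_t.
  by rewrite /X !mulrA t_bl -(mulrA (b l)) t_g mulrA -mulrA mul_t_bk -scalerAr.
have uX : (u (l i) - u (k (s i))) *: X = 0 by rewrite scalerBl -eigen_l -eigen_k subrr.
have u_unit := unit_subr_nodes Delta_unit ni.
by rewrite -[X]scale1r -(mulVr u_unit) -scalerA uX scaler0.
Qed.

Lemma conj_bk k : g * b k = b (permk s k) * g.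
Proof.
transitivity (b (permk s k) * g * b k).
  rewrite -[g * b k]mul1r -sum_bk mulr_suml (bigD1 (permk s k)) //= big1 ?addr0 ?mulrA //.
  by move=> l lk; rewrite mulrA mul_bk_g_bk.
rewrite -[RHS]mulr1 -sum_bk mulr_sumr (bigD1 k) //= big1 ?addr0 // => l lk.
by apply: mul_bk_g_bk; apply: contra lk => /eqP/(can_inj permkK)->.
Qed.

Lemma conj_diag f : g * diag f = diag (fun k => f (permk s k)) * g.
Proof.
rewrite /diag mulr_sumr mulr_suml (reindex_inj (can_inj permkK)); apply: eq_bigr => k _.
by rewrite -scalerAr conj_bk permkK scalerAl.
Qed.

End Conjugation.

Lemma expand_braid_word {Ga Gb : B} {sa sb : {perm 'I_m}} (ha hb : kT -> R) {da : kT -> R} :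
    (forall f, Ga * diag f = diag (fun k => f (permk sa k)) * Ga) ->
    (forall f, Gb * diag f = diag (fun k => f (permk sb k)) * Gb) ->
    Ga * Ga = 1 + diag da * Ga ->
  (Ga + diag ha) * (Gb + diag hb) * (Ga + diag ha) =
    Ga * Gb * Ga
    + (diag (fun k => ha (permk sb (permk sa k))) * Ga * Gb + diag ha * Gb * Ga)
    + (diag (fun k => hb (permk sa k) * (da k + ha (permk sa k)) + ha k * hb k) * Ga
       + diag (fun k => ha k * ha (permk sb k)) * Gb)
    + diag (fun k => hb (permk sa k) + ha k * hb k * ha k).
Proof.
move=> Ga_diag Gb_diag Ga2.
have GhG : Ga * diag hb * Ga =
    diag (fun k => hb (permk sa k)) + diag (fun k => hb (permk sa k) * da k) * Ga.
  by rewrite Ga_diag -mulrA Ga2 mulrDr mulr1 mulrA diagM.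
have GGh : Ga * Gb * diag ha = diag (fun k => ha (permk sb (permk sa k))) * Ga * Gb.
  by rewrite -mulrA Gb_diag mulrA Ga_diag.
have Ghh : Ga * diag hb * diag ha = diag (fun k => hb (permk sa k) * ha (permk sa k)) * Ga.
  by rewrite -mulrA diagM Ga_diag.
have hGh : diag ha * Gb * diag ha = diag (fun k => ha k * ha (permk sb k)) * Gb.
  by rewrite -mulrA Gb_diag mulrA diagM.
have -> : diag (fun k => hb (permk sa k) * (da k + ha (permk sa k)) + ha k * hb k) =
    diag (fun k => hb (permk sa k) * da k) + diag (fun k => hb (permk sa k) * ha (permk sa k))
    + diag (fun k => ha k * hb k).
  by rewrite !diagD; apply: eq_diag => k; rewrite mulrDr.
rewrite !(mulrDl, mulrDr) GhG GGh Ghh hGh !diagM -diagD !addrA.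
by rewrite (ACl (1*6*4*3*7*5*8*2*9)) /=.
Qed.


Lemma braid_words_sub (G1 G2 : B) (s1 s2 : {perm 'I_m}) (h1 h2 d1 d2 : kT -> R) :
    (forall f, G1 * diag f = diag (fun k => f (permk s1 k)) * G1) ->
    (forall f, G2 * diag f = diag (fun k => f (permk s2 k)) * G2) ->
    G1 * G1 = 1 + diag d1 * G1 -> G2 * G2 = 1 + diag d2 * G2 ->
    (forall k, h1 (permk s2 (permk s1 k)) = h2 k) ->
    (forall k, h2 (permk s1 (permk s2 k)) = h1 k) ->
    (forall k, h2 (permk s1 k) * (d1 k + h1 (permk s1 k)) + h1 k * h2 k =
               h2 k * h2 (permk s1 k)) ->
    (forall k, h1 (permk s2 k) * (d2 k + h2 (permk s2 k)) + h2 k * h1 k =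
               h1 k * h1 (permk s2 k)) ->
    (forall k, h2 (permk s1 k) + h1 k * h2 k * h1 k = h1 (permk s2 k) + h2 k * h1 k * h2 k) ->
  (G1 + diag h1) * (G2 + diag h2) * (G1 + diag h1) -
    (G2 + diag h2) * (G1 + diag h1) * (G2 + diag h2) =
  G1 * G2 * G1 - G2 * G1 * G2.
Proof.
move=> G1_diag G2_diag G1_sq G2_sq h12 h21 coef_G1 coef_G2 coef_1.
rewrite (expand_braid_word h1 h2 G1_diag G2_diag G1_sq).
rewrite (expand_braid_word h2 h1 G2_diag G1_diag G2_sq).
rewrite (eq_diag h12) (eq_diag h21) (eq_diag coef_G1) (eq_diag coef_G2) (eq_diag coef_1).
rewrite [diag h1 * _ * _ + _]addrC [diag _ * G2 + _]addrC.
by rewrite -2!(addrA (G1 * G2 * G1)) -2!(addrA (G2 * G1 * G2)) [G2 * G1 * G2 + _]addrC addrKA.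
Qed.

End Idempotents.

Arguments eq_diag {R r u B m t f h}.

Lemma jlo_neq_jhi (n : nat) (j : 'I_n) : jlo j != jhi j.
Proof. by rewrite -val_eqE /= /bump leq0n add1n neq_ltn ltnSn. Qed.

Section Relations.
Variables (R : idomainType) (r : nat) (u : 'I_r -> R) (q : R).
Hypothesis Delta_unit : Delta u \is a GRing.unit.
Hypothesis q_unit : q \is a GRing.unit.
Variables (B : algType R) (n : nat) (t : 'I_n.+1 -> B) (T : 'I_n -> B).
Hypothesis t_nodal : forall i, \prod_(c < r) (t i - (u c)%:A) = 0.
Hypothesis t_comm : forall i j, t i * t j = t j * t i.

Local Notation kT := {ffun 'I_n.+1 -> 'I_r}.
Local Notation diag := (diag u t).
Local Notation d := (q - q^-1).
Local Notation s j := (tperm (jlo j) (jhi j)).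
Local Notation g := (gimg u q t T).

Definition lt_adj (j : 'I_n) (k : kT) : R := (k (jlo j) < k (jhi j))%N%:R.

Local Notation h j := (diag (fun k => d * lt_adj j k)).

Lemma T_gimg j : T j = g j + h j.
Proof. by rewrite /gimg Bp_diag subrK. Qed.

Lemma gimg_t_commutator j i : g j * t i - t (s j i) * g j =
  (T j * t i - t (s j i) * T j) - diag (fun k => d * lt_adj j k * (u (k i) - u (k (s j i)))).
Proof.
rewrite /gimg Bp_diag mulrDl mulrDr mulNr mulrN mul_diag_t // [t _ * diag _]mul_t_diag //.
rewrite opprD opprK addrACA; congr (_ + _).
by rewrite addrC diagB diagN; apply: eq_diag => k; rewrite /lt_adj; ring.
Qed.

Lemma t_relations_iff :
  ((forall j k, k != jlo j -> k != jhi j -> T j * t k = t k * T j) /\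
   (forall j, T j * t (jhi j) = t (jlo j) * T j + corr u q (t (jlo j)) (t (jhi j)) /\
              T j * t (jlo j) = t (jhi j) * T j - corr u q (t (jlo j)) (t (jhi j))))
  <-> (forall j i, g j * t i = t (s j i) * g j).
Proof.
have comm_hi j : g j * t (jhi j) - t (jlo j) * g j =
    (T j * t (jhi j) - t (jlo j) * T j) - corr u q (t (jlo j)) (t (jhi j)).
  by rewrite -{1}(tpermR (jlo j) (jhi j)) gimg_t_commutator tpermR corr_diag.
have comm_lo j : g j * t (jlo j) - t (jhi j) * g j =
    (T j * t (jlo j) - t (jhi j) * T j) + corr u q (t (jlo j)) (t (jhi j)).
  rewrite -{1}(tpermL (jlo j) (jhi j)) gimg_t_commutator tpermL corr_diag // diagN.
  by congr (_ + _); apply: eq_diag => k; rewrite -mulrN opprB.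
have comm_far j i : i != jlo j -> i != jhi j ->
    g j * t i - t i * g j = T j * t i - t i * T j.
  move=> i_lo i_hi; have s_i : s j i = i by rewrite tpermD // eq_sym.
  rewrite -{2}s_i gimg_t_commutator s_i [diag _](_ : _ = 0) ?subr0 //.
  by rewrite -(diag0 u t); apply: eq_diag => k; rewrite subrr mulr0.
split=> [[T_far T_adj] j i | g_t].
  apply/eqP; rewrite -subr_eq0; have [->|i_lo] := eqVneq i (jlo j).
    by rewrite tpermL comm_lo (proj2 (T_adj j)) addrAC subrK subrr.
  have [->|i_hi] := eqVneq i (jhi j).
    by rewrite tpermR comm_hi (proj1 (T_adj j)) addrAC addrK subrr.
  by rewrite tpermD 1?eq_sym // comm_far // T_far // subrr.
split=> [j k k_lo k_hi | j].
  apply/eqP; rewrite -subr_eq0 -comm_far // -{2}(@tpermD _ (jlo j) (jhi j) k) 1?eq_sym //.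
  by rewrite g_t subrr.
split.
  have := comm_hi j; rewrite g_t tpermR subrr => /esym/eqP.
  by rewrite subr_eq0 subr_eq => /eqP->; rewrite addrC.
have := comm_lo j; rewrite g_t tpermL subrr => /esym/eqP.
by rewrite addr_eq0 subr_eq => /eqP->; rewrite addrC.
Qed.

Section Adjacent.
Variable j : 'I_n.
Hypothesis g_t : forall i, g j * t i = t (s j i) * g j.

Lemma conj_diag_gimg f : g j * diag f = diag (fun k => f (permk (s j) k)) * g j.
Proof. by apply: conj_diag => // i; rewrite tpermK. Qed.

Lemma quadratic_relation_iff :
  (T j - q%:A) * (T j + q^-1%:A) = 0 <-> g j * g j = 1 + d *: (ee u t j * g j).
Proof.
have expand (x : B) : (x - q%:A) * (x + q^-1%:A) = x * x - d *: x - 1.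
  rewrite mulrDr !mulrBl mulr_algr mulr_algl -scalerAl mul1r scalerA mulrV // scale1r.
  by rewrite scalerBl opprB !addrA; congr (_ - 1); apply: addrAC.
have hh : h j * h j = d *: h j.
  rewrite diagM // diagZ; apply: eq_diag => k.
  by rewrite /lt_adj; case: (_ < _)%N; rewrite ?mulr0 ?mul0r ?mulr1.
have cross : g j * h j + h j * g j - d *: g j = - (d *: (ee u t j * g j)).
  rewrite conj_diag_gimg -mulr_algl -(diagC Delta_unit t_nodal) -mulrDl -mulrBl.
  rewrite scalerAl -mulNr /ee -diag_indicator diagZ !diagN !diagD; congr (_ * _).
  apply: eq_diag => k; rewrite /lt_adj !ffunE tpermL tpermR -val_eqE /=.
  by case: ltngtP => _; rewrite ?mulr0 ?mulr1 ?addr0 ?add0r ?subrr ?oppr0 ?sub0r.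
have -> : (T j - q%:A) * (T j + q^-1%:A) = g j * g j - d *: (ee u t j * g j) - 1.
  rewrite expand T_gimg; congr (_ - 1); move: (g j) (h j) cross hh => G H cross hh.
  rewrite mulrDl !mulrDr hh scalerDr -cross opprD !addrA.
  by rewrite [_ + d *: H - _]addrAC addrK.
split=> [/eqP|->]; last by rewrite addrK subrr.
by rewrite subr_eq0 subr_eq => /eqP.
Qed.

End Adjacent.

Lemma far_commute_iff (i j : 'I_n) : (i.+1 < j)%N || (j.+1 < i)%N ->
  (forall x, g i * t x = t (s i x) * g i) -> (forall x, g j * t x = t (s j x) * g j) ->
  T i * T j = T j * T i <-> g i * g j = g j * g i.
Proof.
move=> far_ij g_ti g_tj.
have s_fixes (a b : 'I_n) x : (a.+1 < b)%N || (b.+1 < a)%N ->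
    (x == jlo b) || (x == jhi b) -> s a x = x.
  move=> far_ab x_b; apply: tpermD; apply: contraTneq x_b => <-;
  by rewrite -!val_eqE /= /bump !leq0n !add1n; apply/negP; lia.
have g_h (a b : 'I_n) : (forall x, g a * t x = t (s a x) * g a) ->
    (a.+1 < b)%N || (b.+1 < a)%N -> GRing.comm (g a) (h b).
  move=> g_ta far_ab; rewrite /GRing.comm conj_diag_gimg //; congr (_ * _).
  by apply: eq_diag => k; rewrite /lt_adj !ffunE !(s_fixes a b) ?eqxx ?orbT.
have e : T i * T j - T j * T i = g i * g j - g j * g i.
  rewrite !T_gimg commutator_addrr //; first exact: g_h.
    by apply: g_h; rewrite // orbC.
  by rewrite /GRing.comm !diagM //; apply: eq_diag => k; rewrite mulrC.
by split=> comm_ij; apply/eqP; rewrite -subr_eq0; [rewrite -e | rewrite e];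
  rewrite comm_ij subrr.
Qed.

Lemma gimg_sq_diag j : g j * g j = 1 + d *: (ee u t j * g j) ->
  g j * g j = 1 + diag (fun k => d * (k (jlo j) == k (jhi j))%:R) * g j.
Proof. by move->; rewrite scalerAl /ee -diag_indicator diagZ. Qed.

Lemma braid_relation_iff (i j : 'I_n) : j = i.+1 :> nat ->
  (forall x, g i * t x = t (s i x) * g i) -> (forall x, g j * t x = t (s j x) * g j) ->
  g i * g i = 1 + d *: (ee u t i * g i) -> g j * g j = 1 + d *: (ee u t j * g j) ->
  (T i * T j * T i = T j * T i * T j <-> g i * g j * g i = g j * g i * g j).
Proof.
move=> ji g_ti g_tj /gimg_sq_diag sq_i /gimg_sq_diag sq_j.
have hi_lo : jhi i = jlo j by apply: val_inj; rewrite /= /bump leq0n add1n ji.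
have lo_lo : jlo i != jlo j by rewrite -val_eqE /= ji neq_ltn ltnSn.
have lo_hi : jlo i != jhi j by rewrite -val_eqE /= /bump leq0n add1n ji neq_ltn ltnW ?ltnSn.
have s_i_li : s i (jlo i) = jhi i by rewrite tpermL.
have s_i_hi : s i (jhi i) = jlo i by rewrite tpermR.
have s_i_lj : s i (jlo j) = jlo i by rewrite -hi_lo tpermR.
have s_i_hj : s i (jhi j) = jhi j by rewrite tpermD // hi_lo jlo_neq_jhi.
have s_j_li : s j (jlo i) = jlo i by rewrite tpermD // eq_sym.
have s_j_hi : s j (jhi i) = jhi j by rewrite hi_lo tpermL.
have s_j_lj : s j (jlo j) = jhi j by rewrite tpermL.
have s_j_hj : s j (jhi j) = jlo j by rewrite tpermR.
pose perm_vals := (s_i_li, s_i_hi, s_i_lj, s_i_hj, s_j_li, s_j_hi, s_j_lj, s_j_hj).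
have e : T i * T j * T i - T j * T i * T j = g i * g j * g i - g j * g i * g j.
  rewrite !T_gimg (braid_words_sub _ _ _ (conj_diag_gimg g_ti) (conj_diag_gimg g_tj) sq_i sq_j)
    // => k; rewrite /lt_adj !ffunE !perm_vals hi_lo -?val_eqE //.
  (* identities in the values of k at the three positions jlo i, jlo j, jhi j *)
  - exact: lt_max_indicator.
  - exact: lt_min_indicator.
  - by rewrite lt_chain_indicator.
by split=> braid; apply/eqP; rewrite -subr_eq0; [rewrite -e | rewrite e];
  rewrite braid subrr.
Qed.

Lemma HRel_iff_GRel_gimg : HRel u q t T <-> GRel u q t g.
Proof.
split=> [[T_quad [_ [T_braid [T_far [_ T_t]]]]] | [_ [_ [g_t [g_far [g_braid g_quad]]]]]].
  have g_t : forall j i, g j * t i = t (s j i) * g j by apply/t_relations_iff.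
  have g_quad j : g j * g j = 1 + d *: (ee u t j * g j).
    exact/(quadratic_relation_iff (g_t j)).
  do 3 split=> //; split=> [i j far_ij | ]; first exact/(far_commute_iff far_ij)/T_far.
  split=> // i j ji; apply/(braid_relation_iff ji) => //; exact: T_braid.
have [T_far_t T_adj_t] := proj2 t_relations_iff g_t.
split=> [j | ]; first exact/(quadratic_relation_iff (g_t j)).
split=> //; split=> [i j ji | ]; first by apply/(braid_relation_iff ji) => //; apply: g_braid.
split=> [i j far_ij | ]; first exact/(far_commute_iff far_ij)/g_far.
by split=> //; split.
Qed.

End Relations.

Lemma HRel_iff_GRel (R : idomainType) (r : nat) (u : 'I_r -> R) (q : R)
    (B : algType R) (n : nat) (t : 'I_n.+1 -> B) (T : 'I_n -> B) :
  Delta u \is a GRing.unit -> q \is a GRing.unit ->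
  HRel u q t T <-> GRel u q t (gimg u q t T).
Proof.
move=> Delta_unit q_unit.
split=> [rel | rel]; [have [_ [t_nodal [_ [_ [t_comm _]]]]] := rel
                     | have [t_nodal [t_comm _]] := rel];
  by apply/(HRel_iff_GRel_gimg Delta_unit q_unit T t_nodal t_comm).
Qed.

Section Morphisms.
Variables (R : idomainType) (r : nat) (u : 'I_r -> R) (q : R) (A B : algType R).
Variables (f : {lrmorphism A -> B}) (m : nat) (tA : 'I_m -> A) (tB : 'I_m -> B).
Hypothesis f_t : forall i, f (tA i) = tB i.

Let f_scale a x : f (a *: x) = a *: f x. Proof. exact: linearZZ. Qed.

Lemma lrmorph_bk k : f (bk u tA k) = bk u tB k.
Proof.
rewrite rmorph_prod; apply: eq_bigr => i _; rewrite rmorph_prod; apply: eq_bigr => j _.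
by rewrite -f_t -(rmorph_alg f) -rmorphB -f_scale.
Qed.

Lemma lrmorph_Bp i j : f (Bp u q tA i j) = Bp u q tB i j.
Proof.
by rewrite f_scale rmorph_sum; congr (_ *: _); apply: eq_bigr => k _; apply: lrmorph_bk.
Qed.

End Morphisms.

Section PresentationShift.
Variables (R : comNzRingType) (n : nat).
Variables Rel1 Rel2 : forall B : algType R, ('I_n.+1 -> B) -> ('I_n -> B) -> Prop.
Variable beta : forall B : algType R, ('I_n.+1 -> B) -> 'I_n -> B.
Hypothesis lrmorph_beta : forall (A B : algType R) (f : {lrmorphism A -> B})
  (tA : 'I_n.+1 -> A) (tB : 'I_n.+1 -> B),
  (forall i, f (tA i) = tB i) -> forall j, f (beta tA j) = beta tB j.
Hypothesis Rel_shift : forall (B : algType R) (t : 'I_n.+1 -> B) (T : 'I_n -> B),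
  Rel1 t T <-> Rel2 t (fun j => T j + beta t j).

Lemma presented_shift (A : algType R) (t : 'I_n.+1 -> A) (T : 'I_n -> A) :
  presented Rel1 t T -> presented Rel2 t (fun j => T j + beta t j).
Proof.
case=> rel1 univ; split; first exact/Rel_shift.
move=> B tB gB rel2; pose TB j := gB j - beta tB j.
have TB_shift : (fun j => TB j + beta tB j) = gB.
  by apply: functional_extensionality => j; rewrite subrK.
have [|f [f_t f_T f_uniq]] := univ B tB TB; first by apply/Rel_shift; rewrite TB_shift.
exists f; split=> // [j | f' f'_t f'_g].
  by rewrite -(subrK (beta tB j) (gB j)) -/(TB j) -f_T -(lrmorph_beta f_t) -rmorphD.
apply: f_uniq => // j; apply: (addIr (beta tB j)).
by rewrite /TB subrK -(lrmorph_beta f'_t) -rmorphD; apply: f'_g.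
Qed.

End PresentationShift.

Theorem theorem3p11 (R : idomainType) (n r : nat) (q : R) (u : 'I_r -> R) :
  (0 < r)%N -> q \is a GRing.unit -> Delta u \is a GRing.unit ->
  forall (H : algType R) (t : 'I_n.+1 -> H) (T : 'I_n -> H),
    presented (fun B => @HRel R r u q B n) t T ->
    presented (fun B => @GRel R r u q B n) t (gimg u q t T).
Proof.
move=> _ q_unit Delta_unit H t T.
apply: (presented_shift (beta := fun B tB j => Bp u q tB (jlo j) (jhi j))).
  by move=> A B f tA tB f_t j; apply: lrmorph_Bp.
by move=> B tB TB; apply: HRel_iff_GRel.
Qed.
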